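(* In the interval covering setting with known but possibly unequal interval lengths and a covering interval of length $1$, for every $\varepsilon\in(0,1)$ the approximation ratio of the Weighted-Median mechanism is at least $1/\varepsilon$.
   Context: Each agent $i$ has an interval $I_i=[s_i,t_i]$ on the real line whose length $|I_i|>0$ is publicly known; the agents are indexed so that $s_1\le s_2\le\dots\le s_n$. A covering interval $C$ of length $1$ is placed; the cost of agent $i$ is $|I_i|-|I_i\cap C|$ and the social cost is the sum of the agents' costs. For an agent $i$, let $L(i)$ be the set of agents before $i$ in this order. The Weighted-Median mechanism places $C$ at the starting position $s_{i^*}$ (i.e., $C=[s_{i^*},s_{i^*}+1]$) of the leftmost agent $i^*$ such that $\sum_{i\in L(i^* )}|I_i|+|I_{i^*}|\ge\frac12\sum_{i}|I_i|$ and $\sum_{i\in L(i^* )}|I_i|<\frac12\sum_i|I_i|$. The approximation ratio is the supremum over instances of the mechanism's social cost divided by the minimum social cost over all placements of $C$. *)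

From Stdlib Require Import Reals Lra List.
Open Scope R_scope.

(* An instance: n agents, agent i (0 <= i < n) has interval [s i, t i]. *)

Definition sumR (n : nat) (f : nat -> R) : R :=
  fold_right Rplus 0 (map f (seq 0 n)).

Definition overlap (a b c d : R) : R := Rmax 0 (Rmin b d - Rmax a c).

Definition len (s t : nat -> R) (i : nat) : R := t i - s i.

Definition agent_cost (s t : nat -> R) (x : R) (i : nat) : R :=
  len s t i - overlap (s i) (t i) x (x + 1).

Definition social_cost (n : nat) (s t : nat -> R) (x : R) : R :=
  sumR n (agent_cost s t x).

Definition prefix_len (s t : nat -> R) (i : nat) : R := sumR i (len s t).

Definition wm_cond (n : nat) (s t : nat -> R) (i : nat) : Prop :=
  (i < n)%nat /\
  prefix_len s t i + len s t i >= sumR n (len s t) / 2 /\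
  prefix_len s t i < sumR n (len s t) / 2.

(* i is the agent selected by the Weighted-Median mechanism:
   the leftmost agent satisfying the weighted-median condition;
   the mechanism places C = [s i, s i + 1]. *)
Definition wm_agent (n : nat) (s t : nat -> R) (i : nat) : Prop :=
  wm_cond n s t i /\ forall j, (j < i)%nat -> ~ wm_cond n s t j.

Definition valid_instance (n : nat) (s t : nat -> R) : Prop :=
  (1 <= n)%nat /\
  (forall i, (i < n)%nat -> s i < t i) /\
  (forall i j, (i <= j < n)%nat -> s i <= s j).

(** Take a unit interval [[0, 1]] followed by two intervals [[1/4, 1 + h]]
    with [0 <= h <= 1/4].  The two right intervals carry more than half of
    the total length, so Weighted-Median places the covering interval at
    [[1/4, 5/4]] and leaves a quarter of the first agent uncovered, at cost
    [1/4].  Placing it at [[h, 1 + h]] instead covers both right intervals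
    and leaves only [h] of the first one uncovered; [h = eps/4] gives ratio
    [1/eps] (the overhang [h] keeps the optimum positive). *)
From Stdlib Require Import Reals Lra Lia List.
Open Scope R_scope.

Lemma fold_right_Rplus_init (a : R) (l : list R) :
  fold_right Rplus a l = fold_right Rplus 0 l + a.
Proof. induction l as [|y l IH]; simpl; [ring | rewrite IH; ring]. Qed.

Lemma sumR_succ (n : nat) (f : nat -> R) : sumR (S n) f = sumR n f + f n.
Proof.
  unfold sumR; rewrite seq_S, map_app, fold_right_app; simpl.
  rewrite fold_right_Rplus_init; ring.
Qed.

Lemma overlap_nested (a b c d : R) :
  c <= a -> a <= b -> b <= d -> overlap a b c d = b - a.
Proof.
  intros; unfold overlap.
  rewrite (Rmin_left b d), (Rmax_left a c) by lra; apply Rmax_right; lra.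
Qed.

Lemma agent_cost_covered (s t : nat -> R) (x : R) (i : nat) :
  x <= s i -> s i <= t i -> t i <= x + 1 -> agent_cost s t x i = 0.
Proof.
  intros; unfold agent_cost, len; rewrite overlap_nested by lra; ring.
Qed.

Lemma agent_cost_overhang_left (s t : nat -> R) (x : R) (i : nat) :
  s i <= x -> x <= t i -> t i <= x + 1 -> agent_cost s t x i = x - s i.
Proof.
  intros; unfold agent_cost, len, overlap.
  rewrite (Rmin_left (t i)), (Rmax_right (s i) x) by lra.
  rewrite Rmax_right by lra; ring.
Qed.

Definition lure_start (i : nat) : R := match i with O => 0 | S _ => 1/4 end.

Definition lure_end (h : R) (i : nat) : R := match i with O => 1 | S _ => 1 + h end.

Section Lure.

Variable h : R.
Hypothesis h_bounds : 0 <= h <= 1/4.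

Lemma lure_valid : valid_instance 3 lure_start (lure_end h).
Proof.
  split; [lia | split].
  - intros [|i] _; simpl; lra.
  - intros [|i] [|j] Hij; simpl; lra || lia.
Qed.

Lemma lure_total_len : sumR 3 (len lure_start (lure_end h)) = 5/2 + 2 * h.
Proof. rewrite !sumR_succ; unfold sumR, len; simpl; field. Qed.

Lemma lure_wm_agent : wm_agent 3 lure_start (lure_end h) 1.
Proof.
  unfold wm_agent, wm_cond, prefix_len; rewrite lure_total_len.
  rewrite !sumR_succ; unfold sumR, len; simpl.
  split.
  - split; [lia | split; lra].
  - intros j Hj [_ [Hcovers _]]; replace j with 0%nat in Hcovers by lia.
    simpl in Hcovers; lra.
Qed.

Lemma lure_cost_wm : social_cost 3 lure_start (lure_end h) (1/4) = 1/4.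
Proof.
  unfold social_cost; rewrite !sumR_succ; unfold sumR; simpl.
  rewrite agent_cost_overhang_left, !agent_cost_covered; simpl; lra.
Qed.

Lemma lure_cost_at_h : social_cost 3 lure_start (lure_end h) h = h.
Proof.
  unfold social_cost; rewrite !sumR_succ; unfold sumR; simpl.
  rewrite agent_cost_overhang_left, !agent_cost_covered; simpl; lra.
Qed.

End Lure.

Theorem proposition1 (eps : R) (Heps : 0 < eps < 1) :
  exists (n : nat) (s t : nat -> R) (i : nat),
    valid_instance n s t /\ wm_agent n s t i /\
    0 < social_cost n s t (s i) /\
    exists x : R, social_cost n s t x <= eps * social_cost n s t (s i).
Proof.
  set (h := eps / 4).
  assert (Hh : 0 <= h <= 1/4) by (unfold h; lra).
  exists 3%nat, lure_start, (lure_end h), 1%nat.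
  change (lure_start 1) with (1/4).
  rewrite (lure_cost_wm h Hh).
  split; [exact (lure_valid h Hh) | split; [exact (lure_wm_agent h Hh) | split]].
  - lra.
  - exists h; rewrite (lure_cost_at_h h Hh); unfold h; lra.
Qed.
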